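(* Let $X\in\Sigma^*$. Then: (Monotonicity) for all $\ell'\le\ell\le r\le r'$ in $[0,|X|]$, $\mathrm{selfed}(X[\ell\,.\,.\,r))\le\mathrm{selfed}(X[\ell'\,.\,.\,r'))$; (Sub-additivity) for every $m\in[0,|X|]$, $\mathrm{selfed}(X)\le\mathrm{selfed}(X[0\,.\,.\,m))+\mathrm{selfed}(X[m\,.\,.\,|X|))$; (Triangle inequality) for every $Y\in\Sigma^*$, $\mathrm{selfed}(Y)\le\mathrm{selfed}(X)+2\,\mathrm{ed}(X,Y)$.
   Context: $X[i\,.\,.\,j)$ denotes the fragment $X[i]\cdots X[j-1]$. $\mathrm{ed}$ is the unweighted (Levenshtein) edit distance. An alignment of $X$ onto $X$ is a monotone lattice path from $(0,0)$ to $(|X|,|X|)$ with steps $(1,0)$, $(0,1)$, $(1,1)$; its unweighted cost counts steps $(1,0)$, $(0,1)$, and steps $(x,y)\to(x+1,y+1)$ with $X[x]\ne X[y]$. A self-alignment of $X$ is such a path that contains no step $(x,x)\to(x+1,x+1)$ (i.e., never aligns a character to itself); $\mathrm{selfed}(X)$ is the minimum unweighted cost of a self-alignment of $X$. *)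

From mathcomp Require Import all_boot.
From mathcomp Require Import boolp.

Set Implicit Arguments.
Unset Strict Implicit.
Unset Printing Implicit Defensive.

(* A monotone lattice path from (0,0) is encoded by its sequence of steps:
   Hs = (1,0), Vs = (0,1), Ds = (1,1). *)
Inductive step := Hs | Vs | Ds.

Definition isH (s : step) := if s is Hs then true else false.
Definition isV (s : step) := if s is Vs then true else false.
Definition isD (s : step) := if s is Ds then true else false.

Definition frag {T : Type} (X : seq T) (i j : nat) : seq T :=
  take (j - i) (drop i X).

Section Align.
Variable T : eqType.

Definition is_alignment (X Y : seq T) (p : seq step) : bool :=
  (count isH p + count isD p == size X) && (count isV p + count isD p == size Y).

Fixpoint acost (X Y : seq T) (x y : nat) (p : seq step) : nat :=
  match p with
  | [::] => 0
  | Hs :: p' => (acost X Y x.+1 y p').+1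
  | Vs :: p' => (acost X Y x y.+1 p').+1
  | Ds :: p' => (onth X x != onth Y y) + acost X Y x.+1 y.+1 p'
  end.

Definition cost (X Y : seq T) (p : seq step) := acost X Y 0 0 p.

Fixpoint no_self_diag (x y : nat) (p : seq step) : bool :=
  match p with
  | [::] => true
  | Hs :: p' => no_self_diag x.+1 y p'
  | Vs :: p' => no_self_diag x y.+1 p'
  | Ds :: p' => (x != y) && no_self_diag x.+1 y.+1 p'
  end.

Definition is_self_alignment (X : seq T) (p : seq step) : bool :=
  is_alignment X X p && no_self_diag 0 0 p.

Definition trivial_path (X Y : seq T) := nseq (size X) Hs ++ nseq (size Y) Vs.

Lemma count_trivial (X Y : seq T) :
  [/\ count isH (trivial_path X Y) = size X,
      count isV (trivial_path X Y) = size Y &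
      count isD (trivial_path X Y) = 0].
Proof.
rewrite /trivial_path !count_cat !count_nseq /= !mul1n !mul0n !addn0.
by split.
Qed.

Lemma nsd_trivial x y n m : no_self_diag x y (nseq n Hs ++ nseq m Vs).
Proof.
elim: n x => [|n IH] x /=; last exact: IH.
by elim: m y => [|m IH] y //=.
Qed.

Lemma ed_exists (X Y : seq T) :
  exists k, `[< exists p, is_alignment X Y p /\ cost X Y p = k >].
Proof.
exists (cost X Y (trivial_path X Y)); apply/asboolP.
exists (trivial_path X Y); split => //.
rewrite /is_alignment; by case: (count_trivial X Y) => -> -> ->; rewrite !addn0 !eqxx.
Qed.

Lemma selfed_exists (X : seq T) :
  exists k, `[< exists p, is_self_alignment X p /\ cost X X p = k >].
Proof.
exists (cost X X (trivial_path X X)); apply/asboolP.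
exists (trivial_path X X); split => //.
rewrite /is_self_alignment nsd_trivial andbT.
rewrite /is_alignment; by case: (count_trivial X X) => -> -> ->; rewrite !addn0 !eqxx.
Qed.

Definition ed (X Y : seq T) : nat := ex_minn (ed_exists X Y).

Definition selfed (X : seq T) : nat := ex_minn (selfed_exists X).

End Align.

From mathcomp Require Import all_boot boolp zify.

Set Implicit Arguments.
Unset Strict Implicit.
Unset Printing Implicit Defensive.

(* Reversal and transposition preserve self-alignments and their costs, so
   monotonicity reduces to deleting the first character.  A self-alignment of
   X cannot start with a diagonal step, so up to transposition it starts by
   deleting X[0]; erasing row 0 and column 0 saves that deletion, which pays
   for the single step where the path crosses column 0.  Sub-additivity
   concatenates optimal self-alignments.  For the triangle inequality, let A
   be an optimal self-alignment of X and B an optimal alignment of X onto Y: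
   the composite B^T A B aligns Y onto itself at cost at most
   cost A + 2 cost B, and a step (y,y) -> (y+1,y+1) in it would come from
   diagonal steps (d,y) of B, (d,c) of A and (c,y) of B; since B matches each
   character of Y with at most one character of X, d = c, contradicting that
   A is a self-alignment. *)


Definition width (p : seq step) := count isH p + count isD p.

Definition height (p : seq step) := count isV p + count isD p.

Lemma width_cons s p : width (s :: p) = ~~ isV s + width p.
Proof. by case: s; rewrite /width /=; lia. Qed.

Lemma height_cons s p : height (s :: p) = ~~ isH s + height p.
Proof. by case: s; rewrite /height /=; lia. Qed.

Lemma width_cat p q : width (p ++ q) = width p + width q.
Proof. by rewrite /width !count_cat; lia. Qed.

Lemma height_cat p q : height (p ++ q) = height p + height q.
Proof. by rewrite /height !count_cat; lia. Qed.

Lemma width_nseqH k : width (nseq k Hs) = k.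
Proof. by rewrite /width !count_nseq /=; lia. Qed.

Lemma height_nseqH k : height (nseq k Hs) = 0.
Proof. by rewrite /height !count_nseq /=; lia. Qed.

Lemma width_rev p : width (rev p) = width p.
Proof. by rewrite /width !count_rev. Qed.

Lemma height_rev p : height (rev p) = height p.
Proof. by rewrite /height !count_rev. Qed.

Definition swap_step s := match s with Hs => Vs | Vs => Hs | Ds => Ds end.

Definition transpose p := map swap_step p.

Lemma width_transpose p : width (transpose p) = height p.
Proof. by elim: p => [|s p IH] //=; rewrite width_cons height_cons IH; case: s. Qed.

Lemma height_transpose p : height (transpose p) = width p.
Proof. by elim: p => [|s p IH] //=; rewrite width_cons height_cons IH; case: s. Qed.

Lemma no_self_diag_cat x y p q :
  no_self_diag x y (p ++ q) =
  no_self_diag x y p && no_self_diag (x + width p) (y + height p) q.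
Proof.
elim: p x y => [|s p IH] x y /=; first by rewrite !addn0.
by case: s; rewrite IH width_cons height_cons /= -?addSnnS ?andbA.
Qed.

Lemma no_self_diag_shift i x y p :
  no_self_diag (i + x) (i + y) p = no_self_diag x y p.
Proof.
elim: p x y => [|s p IH] x y //=.
by case: s; rewrite -?addnS IH ?eqn_add2l.
Qed.

Lemma no_self_diag_nseqH x y k : no_self_diag x y (nseq k Hs).
Proof. by elim: k x => [|k IH] x //=. Qed.

Lemma no_self_diag_transpose x y p :
  no_self_diag y x (transpose p) = no_self_diag x y p.
Proof. by elim: p x y => [|[] p IH] x y //=; rewrite IH // eq_sym. Qed.

Lemma no_self_diag_rev n x y p : x + width p <= n -> y + height p <= n ->
  no_self_diag (n - (x + width p)) (n - (y + height p)) (rev p) = no_self_diag x y p.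
Proof.
elim: p x y => [|s p IH] x y //=; rewrite width_cons height_cons => hx hy.
rewrite rev_cons -cats1 no_self_diag_cat width_rev height_rev.
case: s hx hy => /= hx hy; rewrite ?add0n ?add1n ?addnS -?addSn ?IH ?andbT //; try lia.
Qed.

Lemma split_leading_H p : 0 < height p ->
  exists k t r, ~~ isH t /\ p = nseq k Hs ++ t :: r.
Proof.
elim: p => [|[] p IH] //; rewrite height_cons /=.
- by move=> /IH[k [t [r [t_notH ->]]]]; exists k.+1, t, r.
- by move=> _; exists 0, Vs, p.
- by move=> _; exists 0, Ds, p.
Qed.

Definition pair_steps (s t : step) : seq step :=
  match isD s, isD t with
  | true, true => [:: Ds]
  | true, false => [:: Hs]
  | false, true => [:: Vs]
  | false, false => [::]
  end.

(* A step of p consuming a character of Y is paired with the step of q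
   consuming the same character.  The value [::] when q runs out first is a
   junk value, never reached when height p = width q. *)
Fixpoint compose (p q : seq step) {struct p} : seq step :=
  match p with
  | [::] => q
  | Hs :: p' => Hs :: compose p' q
  | s :: p' =>
    (fix compose_s (q : seq step) : seq step :=
       match q with
       | [::] => [::]
       | Vs :: q' => Vs :: compose_s q'
       | t :: q' => pair_steps s t ++ compose p' q'
       end) q
  end.

Arguments compose : simpl never.

Lemma compose_H p q : compose (Hs :: p) q = Hs :: compose p q.
Proof. by []. Qed.

Lemma compose_V s p q :
  ~~ isH s -> compose (s :: p) (Vs :: q) = Vs :: compose (s :: p) q.
Proof. by case: s. Qed.

Lemma compose_pair s t p q : ~~ isH s -> ~~ isV t ->
  compose (s :: p) (t :: q) = pair_steps s t ++ compose p q.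
Proof. by case: s; case: t. Qed.

Lemma compose_ind (P : seq step -> seq step -> Prop) :
  (forall q, P [::] q) ->
  (forall p q, P p q -> P (Hs :: p) q) ->
  (forall s p, ~~ isH s -> P (s :: p) [::]) ->
  (forall s p q, ~~ isH s -> P (s :: p) q -> P (s :: p) (Vs :: q)) ->
  (forall s t p q, ~~ isH s -> ~~ isV t -> P p q -> P (s :: p) (t :: q)) ->
  forall p q, P p q.
Proof.
move=> Pnil PH Pnil_r PV Ppair; elim=> [|s p IHp] // q.
case: s; first exact: PH.
all: elim: q => [|[] q IHq]; [exact: Pnil_r | exact: Ppair | exact: PV | exact: Ppair].
Qed.

Lemma size_compose p q : height p = width q ->
  width (compose p q) = width p /\ height (compose p q) = height q.
Proof.
move: p q; apply: compose_ind => [q|p q IH|s p s_notH|s p q s_notH IH|s t p q s_notH t_notV IH].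
- by move=> <-.
- by rewrite compose_H !width_cons !height_cons => /IH[-> ->].
- by move=> /eqP; rewrite height_cons; case: s s_notH.
- rewrite [width (Vs :: q)]width_cons add0n => /IH[wc hc].
  by rewrite compose_V // width_cons height_cons wc hc height_cons.
- rewrite compose_pair // width_cat height_cat !width_cons !height_cons.
  by case: s t s_notH t_notV => [] [] //= _ _ [] /IH[-> ->].
Qed.

Fixpoint diag_steps (x y : nat) (p : seq step) : seq (nat * nat) :=
  match p with
  | [::] => [::]
  | Hs :: p => diag_steps x.+1 y p
  | Vs :: p => diag_steps x y.+1 p
  | Ds :: p => (x, y) :: diag_steps x.+1 y.+1 p
  end.

Lemma no_self_diagE x y p :
  no_self_diag x y p = all (fun d => d.1 != d.2) (diag_steps x y p).
Proof. by elim: p x y => [|[] p IH] x y //=; rewrite IH. Qed.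

Lemma diag_steps_width0 x y p : width p = 0 -> diag_steps x y p = [::].
Proof.
elim: p x y => [|[] p IH] x y //=; rewrite width_cons => /eqP //.
by rewrite add0n => /eqP /IH ->.
Qed.

Lemma mem_diag_steps_transpose x y a b p :
  ((a, b) \in diag_steps y x (transpose p)) = ((b, a) \in diag_steps x y p).
Proof.
elim: p x y => [|[] p IH] x y //=; rewrite ?IH //.
by rewrite !in_cons IH !xpair_eqE andbC.
Qed.

Lemma mem_diag_steps_leq x y a b p : (a, b) \in diag_steps x y p -> y <= b.
Proof.
elim: p x y => [|[] p IH] x y //=; first exact: IH.
- by move/IH; apply: ltnW.
- by rewrite in_cons xpair_eqE => /orP[/andP[_ /eqP->] // | /IH /ltnW].
Qed.

Lemma mem_diag_steps_inj x y a a' b p :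
  (a, b) \in diag_steps x y p -> (a', b) \in diag_steps x y p -> a = a'.
Proof.
elim: p x y => [|[] p IH] x y //=; try exact: IH.
rewrite !in_cons !xpair_eqE.
move=> /orP[/andP[/eqP-> /eqP->]|in_ab] /orP[/andP[/eqP-> /eqP eby]|in_a'b] //.
- by have := mem_diag_steps_leq in_a'b; lia.
- by have := mem_diag_steps_leq in_ab; lia.
- exact: IH in_ab in_a'b.
Qed.

Lemma mem_diag_steps_compose p q x y z a c : height p = width q ->
  (a, c) \in diag_steps x z (compose p q) ->
  exists2 b, (a, b) \in diag_steps x y p & (b, c) \in diag_steps y z q.
Proof.
move: p q x y z; apply: compose_ind
  => [q|p q IH|s p s_notH|s p q s_notH IH|s t p q s_notH t_notV IH] x y z.
- by move=> /esym/(diag_steps_width0 x z)->.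
- by rewrite compose_H height_cons /= add0n => /(IH x.+1 y z).
- by move=> /eqP; rewrite height_cons; case: s s_notH.
- by rewrite [width (Vs :: q)]width_cons add0n compose_V // => /(IH x y z.+1).
- rewrite compose_pair //; case: s t s_notH t_notV => [] [] //= _ _.
  all: rewrite !height_cons !width_cons /= !add1n => -[] hpq.
  + exact: IH.
  + by case/(IH x y.+1 z.+1)=> // b ab bc; exists b; rewrite // in_cons bc orbT.
  + by case/(IH x.+1 y.+1 z)=> // b ab bc; exists b; rewrite // in_cons ab orbT.
  + rewrite in_cons xpair_eqE => /orP[/andP[/eqP-> /eqP->]|].
      by exists y; rewrite in_cons eqxx.
    by case/(IH x.+1 y.+1 z.+1)=> // b ab bc; exists b; rewrite in_cons ?ab ?bc orbT.
Qed.

Lemma no_self_diag_conjugate A B : width A = width B -> height A = width B ->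
  no_self_diag 0 0 A -> no_self_diag 0 0 (compose (compose (transpose B) A) B).
Proof.
move=> wA hA; rewrite !no_self_diagE => /allP nA; apply/allP=> -[a b] /=.
have [_ hBA] : width (compose (transpose B) A) = width (transpose B) /\
               height (compose (transpose B) A) = height A.
  by apply: size_compose; rewrite height_transpose.
case/(mem_diag_steps_compose 0); first by rewrite hBA.
move=> c /(mem_diag_steps_compose 0) [|d]; first by rewrite height_transpose.
rewrite mem_diag_steps_transpose => da dc cb; apply: contraTneq (nA _ dc) => eab /=.
by rewrite -eab in cb; rewrite (mem_diag_steps_inj da cb) eqxx.
Qed.

Lemma neq_triangle (T : eqType) (a b c : T) : (a != c) <= (a != b) + (b != c).
Proof. by case: (a =P b) => [->|_] //=; apply: leq_trans (leq_b1 _) (leq_addr _ _). Qed.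

Section SelfAlignment.
Variable T : eqType.
Implicit Types X Y Z : seq T.

Lemma is_alignmentE X Y p :
  is_alignment X Y p = (width p == size X) && (height p == size Y).
Proof. by []. Qed.

Lemma is_self_alignmentE X p :
  is_self_alignment X p =
  [&& width p == size X, height p == size X & no_self_diag 0 0 p].
Proof. by rewrite /is_self_alignment is_alignmentE andbA. Qed.

Lemma acost_cat X Y x y p q :
  acost X Y x y (p ++ q) =
  acost X Y x y p + acost X Y (x + width p) (y + height p) q.
Proof.
elim: p x y => [|s p IH] x y /=; first by rewrite !addn0.
by case: s; rewrite IH width_cons height_cons /= -?addSnnS ?addnA.
Qed.

Lemma acost_catl X X' Y Y' x y p :
  x + width p <= size X -> y + height p <= size Y ->
  acost (X ++ X') (Y ++ Y') x y p = acost X Y x y p.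
Proof.
elim: p x y => [|s p IH] x y //=.
case: s; rewrite width_cons height_cons /= => hx hy; rewrite IH //; try lia.
by rewrite !onth_cat ifT ?ifT //; lia.
Qed.

Lemma acost_catr X X' Y Y' x y p :
  acost (X ++ X') (Y ++ Y') (size X + x) (size Y + y) p = acost X' Y' x y p.
Proof.
elim: p x y => [|s p IH] x y //=.
by case: s; rewrite -?addnS IH // !onth_cat !ltnNge !leq_addr /= !addKn.
Qed.

Lemma acost_nseqH X Y x y k : acost X Y x y (nseq k Hs) = k.
Proof. by elim: k x => [|k IH] x //=; rewrite IH. Qed.

Lemma acost_width0 X Y x y p : width p = 0 -> acost X Y x y p = size p.
Proof.
elim: p x y => [|[] p IH] x y //=; rewrite width_cons => /eqP //.
by rewrite add0n => /eqP /IH ->.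
Qed.

Lemma acost_transpose X Y x y p : acost Y X y x (transpose p) = acost X Y x y p.
Proof. by elim: p x y => [|[] p IH] x y //=; rewrite IH // eq_sym. Qed.

Lemma onth_rev X i : i < size X -> onth (rev X) i = onth X (size X - i.+1).
Proof. by move=> ltiX; rewrite !onthE map_rev nth_rev size_map. Qed.

Lemma acost_rev X Y x y p : x + width p <= size X -> y + height p <= size Y ->
  acost (rev X) (rev Y) (size X - (x + width p)) (size Y - (y + height p)) (rev p)
  = acost X Y x y p.
Proof.
elim: p x y => [|s p IH] x y //=; rewrite width_cons height_cons => hx hy.
rewrite rev_cons -cats1 acost_cat width_rev height_rev.
case: s hx hy => /= hx hy; rewrite ?add0n ?add1n ?addnS -?addSn ?IH ?addn1 //; try lia.
rewrite addn0 addnC !onth_rev; try lia.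
by congr ((onth X _ != onth Y _) + _); lia.
Qed.

Lemma acost_compose X Y Z p q x y z : height p = width q ->
  acost X Z x z (compose p q) <= acost X Y x y p + acost Y Z y z q.
Proof.
move: p q x y z; apply: compose_ind
  => [q|p q IH|s p s_notH|s p q s_notH IH|s t p q s_notH t_notV IH] x y z.
- by move=> /esym w0; rewrite !acost_width0.
- by move=> /IH le_c; rewrite compose_H /= addSn ltnS.
- by move=> /eqP; rewrite height_cons; case: s s_notH.
- rewrite [width (Vs :: q)]width_cons add0n => /IH le_c.
  by move: (le_c x y z.+1); rewrite compose_V //=; lia.
- rewrite compose_pair // acost_cat.
  move: (neq_triangle (onth X x) (onth Y y) (onth Z z)).
  case: s t s_notH t_notV => [] [] //= _ _; rewrite !height_cons !width_cons /= !add1n;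
    move=> tri [] /IH le_c; move: (le_c x y.+1 z) (le_c x y.+1 z.+1) (le_c x.+1 y.+1 z)
    (le_c x.+1 y.+1 z.+1); rewrite /width /height /= ?add0n ?addn0 ?addn1; lia.
Qed.

Lemma selfed_le X p : is_self_alignment X p -> selfed X <= cost X X p.
Proof. by rewrite /selfed; case: ex_minnP => m _ min_m Ap; apply/min_m/asboolP; exists p. Qed.

Lemma selfed_witness X : exists2 p, is_self_alignment X p & cost X X p = selfed X.
Proof. by rewrite /selfed; case: ex_minnP => m /asboolP[p []]; exists p. Qed.

Lemma ed_witness X Y : exists2 p, is_alignment X Y p & cost X Y p = ed X Y.
Proof. by rewrite /ed; case: ex_minnP => m /asboolP[p []]; exists p. Qed.

Lemma selfed_cat X Y : selfed (X ++ Y) <= selfed X + selfed Y.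
Proof.
have [p] := selfed_witness X; rewrite is_self_alignmentE => /and3P[/eqP wp /eqP hp np] <-.
have [q] := selfed_witness Y; rewrite is_self_alignmentE => /and3P[/eqP wq /eqP hq nq] <-.
apply: leq_trans (selfed_le (p := p ++ q) _) _.
  rewrite is_self_alignmentE no_self_diag_cat width_cat height_cat.
  by rewrite wp hp wq hq size_cat !add0n -(addn0 (size X)) no_self_diag_shift np nq !eqxx.
rewrite /cost acost_cat acost_catl ?wp ?hp // !add0n.
by rewrite -[size X]addn0 acost_catr.
Qed.

Lemma self_alignment_transpose X p :
  is_self_alignment X (transpose p) = is_self_alignment X p.
Proof.
by rewrite !is_self_alignmentE width_transpose height_transpose no_self_diag_transpose andbCA.
Qed.

Lemma selfed_rev X : selfed (rev X) <= selfed X.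
Proof.
have [p] := selfed_witness X; rewrite is_self_alignmentE => /and3P[/eqP wp /eqP hp np] <-.
have := no_self_diag_rev (x := 0) (y := 0) (n := size X) (p := p).
have := acost_rev (X := X) (Y := X) (x := 0) (y := 0) (p := p).
rewrite !add0n wp hp subnn => /(_ (leqnn _) (leqnn _)) cost_rev /(_ (leqnn _) (leqnn _)) nsd_rev.
apply: leq_trans (selfed_le (p := rev p) _) _; last by rewrite /cost cost_rev.
by rewrite is_self_alignmentE width_rev height_rev size_rev wp hp nsd_rev np !eqxx.
Qed.

Lemma selfed_behead_le_cost Z p :
  is_self_alignment Z (Hs :: p) -> selfed (behead Z) <= cost Z Z (Hs :: p).
Proof.
rewrite is_self_alignmentE width_cons height_cons => /and3P[/eqP wp /eqP hp np].
case: Z wp hp => [|z Z] //= wp hp.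
have shift x y q : acost (z :: Z) (z :: Z) x.+1 y.+1 q = acost Z Z x y q.
  exact: (acost_catr [:: z] Z [:: z] Z x y q).
have /split_leading_H[k [t [r [t_notH ep]]]] : 0 < height p by move: hp; rewrite add0n => ->.
move: wp hp np; rewrite {p}ep /= width_cat height_cat no_self_diag_cat.
rewrite width_nseqH height_nseqH width_cons height_cons no_self_diag_nseqH /= add0n.
rewrite /cost /= acost_cat acost_nseqH height_nseqH width_nseqH add0n.
(* Drop the first step and the first vertical move t; a diagonal t leaves
   its horizontal part behind. *)
case: t t_notH => //= _ wr hr nr; rewrite ?add0n ?add1n in wr hr nr *;
  [pose B := nseq k Hs ++ r | pose B := nseq k.+1 Hs ++ r];
  apply: leq_trans (selfed_le (p := B) _) _; rewrite {}/B.
all: try by rewrite /cost acost_cat acost_nseqH width_nseqH height_nseqH -shift !add0n; lia.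
all: rewrite is_self_alignmentE width_cat height_cat no_self_diag_cat width_nseqH.
all: rewrite height_nseqH no_self_diag_nseqH -(no_self_diag_shift 1) !add0n add1n nr.
all: by apply/and3P; split; apply/eqP; lia.
Qed.

Lemma selfed_behead Z : selfed (behead Z) <= selfed Z.
Proof.
have [[|[] p] Ap <-] := selfed_witness Z.
- move: (Ap); rewrite is_self_alignmentE => /and3P[/eqP/esym/size0nil-> _ _].
  exact: selfed_le.
- exact: selfed_behead_le_cost.
- rewrite -self_alignment_transpose in Ap.
  by rewrite /cost -acost_transpose; apply: selfed_behead_le_cost.
- by rewrite is_self_alignmentE /= !andbF in Ap.
Qed.

Lemma selfed_drop Z k : selfed (drop k Z) <= selfed Z.
Proof.
elim: k => [|k IH]; first by rewrite drop0.
by rewrite -add1n -drop_drop drop1; apply: leq_trans (selfed_behead _) IH.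
Qed.

Lemma selfed_take Z k : selfed (take k Z) <= selfed Z.
Proof.
have [le_k_Z|lt_Z_k] := leqP k (size Z); last by rewrite take_oversize // ltnW.
rewrite -[take k Z]revK -(subKn le_k_Z) -drop_rev.
by apply: leq_trans (selfed_rev _) _; apply: leq_trans (selfed_drop _ _) (selfed_rev _).
Qed.

Lemma frag_frag X l' l r r' : l' <= l -> l <= r -> r <= r' ->
  frag X l r = take (r - l) (drop (l - l') (frag X l' r')).
Proof.
move=> le_l'l le_lr le_rr'; rewrite /frag.
have -> : r' - l' = (r' - l) + (l - l') by lia.
by rewrite -take_drop drop_drop subnK // take_takel //; lia.
Qed.

Lemma selfed_frag X l' l r r' : l' <= l -> l <= r -> r <= r' ->
  selfed (frag X l r) <= selfed (frag X l' r').
Proof.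
move=> le_l'l le_lr le_rr'; rewrite (frag_frag X le_l'l le_lr le_rr').
by apply: leq_trans (selfed_take _ _) (selfed_drop _ _).
Qed.

Lemma alignment_transpose X Y p :
  is_alignment X Y p -> is_alignment Y X (transpose p).
Proof. by rewrite !is_alignmentE width_transpose height_transpose andbC. Qed.

Lemma alignment_compose X Y Z p q :
  is_alignment X Y p -> is_alignment Y Z q -> is_alignment X Z (compose p q).
Proof.
rewrite !is_alignmentE => /andP[/eqP wp /eqP hp] /andP[/eqP wq /eqP hq].
by have [-> ->] := size_compose (etrans hp (esym wq)); rewrite wp hq !eqxx.
Qed.

Lemma cost_compose X Y Z p q : is_alignment X Y p -> is_alignment Y Z q ->
  cost X Z (compose p q) <= cost X Y p + cost Y Z q.
Proof.
rewrite !is_alignmentE => /andP[_ /eqP hp] /andP[/eqP wq _].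
exact/acost_compose/(etrans hp (esym wq)).
Qed.

Lemma selfed_triangle X Y : selfed Y <= selfed X + 2 * ed X Y.
Proof.
have [B alB <-] := ed_witness X Y.
have [A] := selfed_witness X; rewrite /is_self_alignment => /andP[alA nA] <-.
have alBA := alignment_compose (alignment_transpose alB) alA.
apply: leq_trans (selfed_le (p := compose (compose (transpose B) A) B) _) _.
  rewrite /is_self_alignment (alignment_compose alBA alB) no_self_diag_conjugate //.
    by move: alA alB; rewrite !is_alignmentE => /andP[/eqP-> _] /andP[/eqP-> _].
  by move: alA alB; rewrite !is_alignmentE => /andP[_ /eqP->] /andP[/eqP-> _].
apply: leq_trans (cost_compose alBA alB) _.
apply: leq_trans (leq_add (cost_compose (alignment_transpose alB) alA) (leqnn _)) _.
by rewrite /cost acost_transpose; lia.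
Qed.

End SelfAlignment.

Theorem lemma4p2 (T : eqType) (X : seq T) :
  (forall l' l r r' : nat, l' <= l -> l <= r -> r <= r' -> r' <= size X ->
     selfed (frag X l r) <= selfed (frag X l' r'))
  /\ (forall m : nat, m <= size X ->
     selfed X <= selfed (frag X 0 m) + selfed (frag X m (size X)))
  /\ (forall Y : seq T, selfed Y <= selfed X + 2 * ed X Y).
Proof.
split; [|split].
- by move=> l' l r r' le_l'l le_lr le_rr' _; apply: selfed_frag.
- move=> m _; rewrite /frag subn0 drop0 [take (size X - m) _]take_oversize ?size_drop //.
  by rewrite -{1}(cat_take_drop m X); apply: selfed_cat.
- exact: selfed_triangle.
Qed.
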